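(* Let a project have countable state space $\mathbb{X}$, transition probabilities $p(i,j)$ such that for every $i$, $|\{j:p(i,j)>0\}|\le N$, bounded active rewards $R(i)$, discount factor $0<\beta\le1$, horizon $T$, and initial state $i_0$. Let $\mathbb{X}_s(i_0)$ be the (finite) set of states reachable from $i_0$ within $s$ transitions, and let $\mathbb{Y}_T^{\{0,1\}}(i_0)=\{(d,i):1\le d\le T,\ i\in\mathbb{X}_{T-d}(i_0)\}$. For $(d,i)$ with $1\le d\le T$ define $$\lambda^*(d,i)=\max_{1\le\tau\le d}\frac{\mathsf{E}_i^{\tau}\big[\sum_{t=0}^{\tau-1}\beta^tR(X(t))\big]}{\mathsf{E}_i^{\tau}\big[\sum_{t=0}^{\tau-1}\beta^t\big]}.$$ Consider the auxiliary project with state space $\mathbb{Y}_T^{\{0,1\}}(i_0)\cup\{(0,\Omega)\}$ in which, under the active action, $(d,i)$ with $d\ge2$ moves to $(d-1,j)$ with probability $p(i,j)$, $(1,i)$ moves to the absorbing state $(0,\Omega)$, and the active reward is $R^1(d,i)=R(i)$; and let $$G'(d,i)=\max_{1\le\tau\le d}\frac{\mathsf{E}_{(d,i)}^{\tau}\big[\sum_{t=0}^{\tau-1}\beta^tR^1(Y(t))\big]}{\mathsf{E}_{(d,i)}^{\tau}\big[\sum_{t=0}^{\tau-1}\beta^t\big]}$$ for $(d,i)\in\mathbb{Y}_T^{\{0,1\}}(i_0)$, $Y(t)$ being the auxiliary project's state engaged from $Y(0)=(d,i)$. Then $\lambda^*(d,i)=G'(d,i)$ for all $(d,i)\in\ma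thbb{Y}_T^{\{0,1\}}(i_0)$.
   Context: The state $X(t)$ evolves as a Markov chain with transition probabilities $p(i,j)$ each time the project is engaged; stopping times are with respect to the history of the process. Note that if $i\in\mathbb{X}_{T-d}(i_0)$, all states reachable within $d-1$ further transitions lie in $\mathbb{X}_{T-1}(i_0)$ with correspondingly smaller remaining times, so the auxiliary project is well defined. *)

From mathcomp Require Import all_boot all_order all_algebra.
Set Implicit Arguments.
Unset Strict Implicit.
Unset Printing Implicit Defensive.
Import Order.TTheory GRing.Theory Num.Theory.
Local Open Scope ring_scope.

(* A generic discrete Markov project: states of type S, transition
   probabilities p, and an explicit list succ x of the states j with
   p x j > 0 (finite support). *)

(* Stopping times 1 <= tau <= k w.r.t. the history: a rule
   cont : seq S -> bool; after engaging at times 0..t-1 and observing the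
   history [:: X(0); ...; X(t)], the project is engaged again at time t
   iff cont [:: X(0); ...; X(t)] holds and t < k.  Hence
   tau = min(k, first t >= 1 with ~~ cont (X(0..t))).

   exp_disc cont f k h x = E[ sum_{t=0}^{tau-1} beta^t f(X(t)) ]
   computed for the process currently at x with history h (ending in x),
   with at most k remaining engagements (k >= 1 means "engage now"). *)
Fixpoint exp_disc (R : realFieldType) (S : Type) (p : S -> S -> R)
    (succ : S -> seq S) (beta : R) (cont : seq S -> bool) (f : S -> R)
    (k : nat) (h : seq S) (x : S) : R :=
  match k with
  | 0 => 0
  | k'.+1 => f x + beta * \sum_(j <- succ x)
              p x j * (if cont (rcons h j)
                       then exp_disc p succ beta cont f k' (rcons h j) j
                       else 0)
  end.

Definition index_ratio (R : realFieldType) (S : Type) (p : S -> S -> R)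
    (succ : S -> seq S) (beta : R) (f : S -> R) (d : nat)
    (cont : seq S -> bool) (x : S) : R :=
  exp_disc p succ beta cont f d [:: x] x /
  exp_disc p succ beta cont (fun _ => 1) d [:: x] x.

Definition is_max_index (R : realFieldType) (S : Type) (p : S -> S -> R)
    (succ : S -> seq S) (beta : R) (f : S -> R) (d : nat) (x : S) (v : R)
    : Prop :=
  (exists cont, index_ratio p succ beta f d cont x = v) /\
  (forall cont, index_ratio p succ beta f d cont x <= v).

Fixpoint reachable (R : realFieldType) (X : Type) (p : X -> X -> R)
    (s : nat) (i0 j : X) : Prop :=
  match s with
  | 0 => j = i0
  | s'.+1 => reachable p s' i0 j \/ exists k, reachable p s' i0 k /\ 0 < p k j
  end.

(* Auxiliary project: Some (d, i) is the state (d, i), None is (0, Omega). *)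
Definition aux_p (R : realFieldType) (X : Type) (p : X -> X -> R)
    (y z : option (nat * X)) : R :=
  match y, z with
  | Some (d, i), Some (d', j) => if (1 < d)%N && (d' == d.-1) then p i j else 0
  | Some (d, _), None => if (d <= 1)%N then 1 else 0
  | None, None => 1
  | None, Some _ => 0
  end.

Definition aux_succ (X : Type) (supp : X -> seq X) (y : option (nat * X))
    : seq (option (nat * X)) :=
  match y with
  | Some (d, i) => if (1 < d)%N then map (fun j => Some (d.-1, j)) (supp i)
                   else [:: None]
  | None => [:: None]
  end.

Definition aux_R (R : realFieldType) (X : Type) (r : X -> R)
    (y : option (nat * X)) : R :=
  match y with
  | Some (_, i) => r i
  | None => 0
  end.

(* A truncated stopping rule only ever inspects the finitely many histories of
   length at most d, so the index ratio takes finitely many values and the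
   maximum over 1 <= tau <= d is attained.  Labelling the t-th state of a
   history with the remaining horizon d - t is a bijection between the
   histories of the project started at i and those of the auxiliary project
   started at (d, i), which carries transition probabilities and rewards along;
   stopping rules therefore correspond, with equal index ratios, and the two
   maxima coincide. *)
From mathcomp Require Import all_boot all_order all_algebra.
Set Implicit Arguments.
Unset Strict Implicit.
Unset Printing Implicit Defensive.
Import Order.TTheory GRing.Theory Num.Theory.
Local Open Scope ring_scope.

Section FiniteHorizon.
Variables (R : realFieldType) (S : eqType) (p : S -> S -> R)
  (succ : S -> seq S) (beta : R).

Fixpoint hist (k : nat) (h : seq S) (x : S) : seq (seq S) :=
  match k with
  | 0 => [::]
  | k'.+1 => flatten [seq rcons h j :: hist k' (rcons h j) j | j <- succ x]
  end.

Lemma eq_in_exp_disc (c1 c2 : seq S -> bool) f k h x :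
  {in hist k h x, c1 =1 c2} ->
  exp_disc p succ beta c1 f k h x = exp_disc p succ beta c2 f k h x.
Proof.
elim: k h x => [//|k IHk] h x /= c12; congr (_ + _ * _).
apply: eq_big_seq => j succ_j.
have sub_hist : {subset rcons h j :: hist k (rcons h j) j <= hist k.+1 h x}.
  by move=> g g_in; apply/flattenP; exists (rcons h j :: hist k (rcons h j) j);
    rewrite // (map_f (fun j => rcons h j :: _)).
rewrite c12 ?sub_hist ?mem_head // IHk // => g g_in.
by rewrite c12 // sub_hist // inE g_in orbT.
Qed.

Lemma eq_exp_disc (c1 c2 : seq S -> bool) : c1 =1 c2 ->
  forall f k h x,
  exp_disc p succ beta c1 f k h x = exp_disc p succ beta c2 f k h x.
Proof. by move=> c12 f k h x; apply: eq_in_exp_disc => g _. Qed.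

Lemma eq_index_ratio f d (c1 c2 : seq S -> bool) x : c1 =1 c2 ->
  index_ratio p succ beta f d c1 x = index_ratio p succ beta f d c2 x.
Proof. by move=> c12; rewrite /index_ratio !(eq_exp_disc c12). Qed.

Lemma is_max_index_exists f d x : exists v, is_max_index p succ beta f d x v.
Proof.
pose H := hist d [:: x] x.
pose ratio c := index_ratio p succ beta f d c x.
pose cont (m : (size H).-tuple bool) g := g \in mask m H.
have ratio_mask c : ratio c = ratio (cont (map_tuple c (in_tuple H))).
  have c_filter : {in H, c =1 [in filter c H]}.
    by move=> g g_in; rewrite mem_filter g_in andbT.
  by rewrite /ratio /index_ratio /cont /= -filter_mask !(eq_in_exp_disc _ c_filter).
pose m0 := [tuple of nseq (size H) false].
exists (ratio (cont [arg max_(m > m0) ratio (cont m)]%O)); split.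
  by exists (cont [arg max_(m > m0) ratio (cont m)]%O).
move=> c; rewrite -/(ratio c) ratio_mask.
by case: arg_maxP => // m _ /(_ (map_tuple c (in_tuple H))); apply.
Qed.

End FiniteHorizon.

Fixpoint aux_history (X : Type) (d : nat) (h : seq X) : seq (option (nat * X)) :=
  if h is x :: h' then Some (d, x) :: aux_history d.-1 h' else [::].

Lemma aux_history_rcons (X : Type) d (h : seq X) j :
  aux_history d (rcons h j) = rcons (aux_history d h) (Some ((d - size h)%N, j)).
Proof. by elim: h d => [|x h IHh] d /=; rewrite ?subn0 // IHh subnS predn_sub. Qed.

Lemma aux_historyK (X : Type) (x0 : X) d :
  cancel (aux_history d) (map (oapp snd x0)).
Proof. by move=> h; elim: h d => [|x h IHh] d //=; rewrite IHh. Qed.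

Section AuxiliaryProject.
Variables (R : realFieldType) (X : Type) (p : X -> X -> R) (supp : X -> seq X)
  (beta : R) (d : nat).

Lemma exp_disc_aux (c : seq (option (nat * X)) -> bool) (f : X -> R)
    (g : option (nat * X) -> R) k h x :
  (forall n y, g (Some (n, y)) = f y) -> (size h + k = d.+1)%N ->
  exp_disc p supp beta (c \o aux_history d) f k h x =
  exp_disc (aux_p p) (aux_succ supp) beta c g k (aux_history d h) (Some (k, x)).
Proof.
move=> gf; elim: k h x => [//|k IHk] h x size_h /=; rewrite gf; congr (_ + _ * _).
case: k IHk size_h => [|k] IHk size_h.
  by rewrite big_seq1 if_same mulr0; apply: big1 => j _; rewrite if_same mulr0.
rewrite big_map; apply: eq_bigr => j _; rewrite IHk; last first.
  by rewrite size_rcons addSnnS.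
rewrite aux_history_rcons (_ : (d - size h)%N = k.+1); last first.
  by move: size_h; rewrite addnS => -[<-]; rewrite addKn.
by rewrite /aux_p /= eqxx.
Qed.

Lemma index_ratio_aux (c : seq (option (nat * X)) -> bool) (r : X -> R) i :
  index_ratio p supp beta r d (c \o aux_history d) i =
  index_ratio (aux_p p) (aux_succ supp) beta (aux_R r) d c (Some (d, i)).
Proof.
rewrite /index_ratio (@exp_disc_aux c r (aux_R r)) //.
by rewrite (@exp_disc_aux c (fun=> 1) (fun=> 1)).
Qed.

End AuxiliaryProject.

Theorem proposition6 (R : realFieldType) (X : countType)
    (p : X -> X -> R) (supp : X -> seq X) (N : nat) (r : X -> R)
    (beta : R) (T : nat) (i0 : X) :
  (forall i j, 0 <= p i j) ->
  (forall i j, (0 < p i j) = (j \in supp i)) ->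
  (forall i, uniq (supp i)) ->
  (forall i, (size (supp i) <= N)%N) ->
  (forall i, \sum_(j <- supp i) p i j = 1) ->
  (exists M : R, forall i, `|r i| <= M) ->
  0 < beta -> beta <= 1 ->
  forall (d : nat) (i : X), (1 <= d <= T)%N -> reachable p (T - d) i0 i ->
  exists v : R,
    is_max_index p supp beta r d i v /\
    is_max_index (aux_p p) (aux_succ supp) beta (aux_R r) d (Some (d, i)) v.
Proof.
(* The correspondence is pathwise. *)
move=> _ _ _ _ _ _ _ _ d i _ _.
have [v [[c ratio_c] ratio_le]] := is_max_index_exists p supp beta r d i.
exists v; split; first by split; [exists c|].
split=> [|c']; last by rewrite -index_ratio_aux; apply: ratio_le.
exists (c \o map (oapp snd i)); rewrite -index_ratio_aux -ratio_c.
by apply: eq_index_ratio => h /=; rewrite aux_historyK.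
Qed.
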